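(* Let $\mathcal C$ be a category of $\mathcal A$-coloured noncrossing partitions, let $p\in\mathcal C(w,\emptyset)$ be a partition lying on one line and let $q$ be a full subpartition of $p$, regarded as a partition in $NC^{\mathcal A}(w_a w_{a+1}\cdots w_{a+b},\emptyset)$. Then $q^*q\in\mathcal C(w_a\cdots w_{a+b}, w_a\cdots w_{a+b})$.
   Context: Colour sets and partitions: a colour set is a set $\mathcal A$ with an involution $a\mapsto a^{-1}$. For words $w,w'$ on $\mathcal A$, an element of $P^{\mathcal A}(w,w')$ is a partition of $|w|+|w'|$ points drawn as an upper row coloured (left to right) by $w$ and a lower row coloured by $w'$; its subsets are blocks. It is noncrossing if there are no four points $k_1<k_2<k_3<k_4$ (ordering: upper row left to right, then lower row right to left) with $k_1,k_3$ in one block and $k_2,k_4$ in a different block. Category operations: tensor product (horizontal juxtaposition), composition $qp$ (stack $q$ below $p$, erase middle points and closed loops), adjoint $p^*$ (reflection in a horizontal axis, exchanging rows), rotation (moving an extreme point to the same end of the other row and replacing its colour $a$ by $a^{-1}$). A category of noncrossing partitions is a family $\mathcal C(w,w')\subset NC^{\mathcal A}(w,w')$ stable under these operations and containing $\pi(a,a)$ for all $a$. A partition lies on one line if it has no lower points. For $p\in P(w,\emptyset)$ with points $1,\dots,k$, a full subpartition is a union $q$ of blocks of $p$ whose set of points is an interval $\{a,a+1,\dots,a+b\}$ with $1\leqslant a\leqslant a+b\leqslant k$. *)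

(* Points of a partition in P(w,w') are numbered 0 .. |w|+|w'|-1:
   upper row left to right = 0 .. |w|-1, lower row left to right = |w| .. |w|+|w'|-1.
   A partition is a set of blocks {set {set 'I_n}} forming a partition of [set: 'I_n].
   Operations are defined via the induced equivalence relation on point indices. *)
From HB Require Import structures.
From mathcomp Require Import all_boot.
Set Implicit Arguments. Unset Strict Implicit. Unset Printing Implicit Defensive.

Definition pset (n : nat) := {set {set 'I_n}}.

Definition is_part n (P : pset n) : bool := partition P [set: 'I_n].

Definition same n (P : pset n) (i j : nat) : bool :=
  [exists B in P, [exists x in B, [exists y in B, (val x == i) && (val y == j)]]].

Definition mkpart n (r : nat -> nat -> bool) : pset n :=
  equivalence_partition (fun x y : 'I_n => r (val x) (val y)) [set: 'I_n].

(* transport along a point map f (new index -> old index) *)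
Definition pull m n (f : nat -> nat) (P : pset n) : pset m :=
  mkpart m (fun i j => same P (f i) (f j)).

(* position of point x in the cyclic order (upper left-to-right, then lower
   right-to-left), for a partition in P(w,w') with |w| = k, |w'| = l *)
Definition cpos (k l x : nat) : nat := if x < k then x else k + l - 1 - (x - k).

Definition noncrossing k l (P : pset (k + l)) : bool :=
  [forall x1 : 'I_(k + l), forall x2 : 'I_(k + l), forall x3 : 'I_(k + l),
   forall x4 : 'I_(k + l),
     ~~ [&& cpos k l x1 < cpos k l x2, cpos k l x2 < cpos k l x3,
            cpos k l x3 < cpos k l x4, same P x1 x3, same P x2 x4 &
            ~~ same P x1 x2]].

Definition is_nc k l (P : pset (k + l)) : bool := is_part P && noncrossing P.

Section Ops.
Variable A : Type.

Definition tens_side (k1 l1 k2 : nat) (x : nat) : bool * nat :=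
  if x < k1 then (true, x)
  else if x < k1 + k2 then (false, x - k1)
  else if x < k1 + k2 + l1 then (true, k1 + (x - k1 - k2))
  else (false, k2 + (x - k1 - k2 - l1)).

Definition tensor (w1 w1' w2 w2' : seq A)
    (p : pset (size w1 + size w1')) (q : pset (size w2 + size w2')) :
    pset (size (w1 ++ w2) + size (w1' ++ w2')) :=
  mkpart _ (fun i j =>
    let si := tens_side (size w1) (size w1') (size w2) i in
    let sj := tens_side (size w1) (size w1') (size w2) j in
    (si.1 == sj.1) &&
    (if si.1 then same p si.2 sj.2 else same q si.2 sj.2)).

Definition adjoint (w w' : seq A) (p : pset (size w + size w')) :
    pset (size w' + size w) :=
  pull _ (fun x => if x < size w' then size w + x else x - size w') p.

(* composition q p: p in P(w,w'), q in P(w',w''), q stacked below p *)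
Definition comp_edge (w w' w'' : seq A)
    (p : pset (size w + size w')) (q : pset (size w' + size w'')) (i j : nat) : bool :=
  let n1 := size w + size w' in
  [|| [&& i < n1, j < n1 & same p i j],
      [&& n1 <= i, n1 <= j & same q (i - n1) (j - n1)],
      [&& size w <= i, i < n1 & j == n1 + (i - size w)] |
      [&& size w <= j, j < n1 & i == n1 + (j - size w)]].

Definition part_comp (w w' w'' : seq A)
    (q : pset (size w' + size w'')) (p : pset (size w + size w')) :
    pset (size w + size w'') :=
  let n1 := size w + size w' in
  let N := n1 + (size w' + size w'') in
  let g x := if x < size w then x else n1 + size w' + (x - size w) in
  mkpart _ (fun i j =>
    [exists x : 'I_N, exists y : 'I_N,
       [&& val x == g i, val y == g j &
           connect (fun a b : 'I_N => comp_edge p q (val a) (val b)) x y]]).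

Definition idpart : pset 2 := mkpart 2 (fun _ _ => true).

End Ops.

(* rotations (4 kinds); b is the new colour (instantiated with a^-1 below) *)
Definition rot_ul (A : Type) (a b : A) (w w' : seq A)
    (p : pset (size (a :: w) + size w')) : pset (size w + size (b :: w')) :=
  pull _ (fun x => if x < size w then x.+1
                   else if x == size w then 0 else x) p.
Definition rot_ur (A : Type) (a b : A) (w w' : seq A)
    (p : pset (size (w ++ [:: a]) + size w')) : pset (size w + size (w' ++ [:: b])) :=
  pull _ (fun x => if x < size w then x
                   else if x < size w + size w' then x.+1
                   else size w) p.
Definition rot_ll (A : Type) (a b : A) (w w' : seq A)
    (p : pset (size w + size (a :: w'))) : pset (size (b :: w) + size w') :=
  pull _ (fun x => if x == 0 then size w
                   else if x <= size w then x.-1 else x) p.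
Definition rot_lr (A : Type) (a b : A) (w w' : seq A)
    (p : pset (size w + size (w' ++ [:: a]))) : pset (size (w ++ [:: b]) + size w') :=
  pull _ (fun x => if x < size w then x
                   else if x == size w then size w + size w'
                   else x.-1) p.

Definition pcat_family (A : Type) := forall w w' : seq A, pset (size w + size w') -> Prop.

Record category_of_nc_partitions (A : Type) (inv : A -> A) (C : pcat_family A) : Prop := {
  cat_nc : forall w w' p, C w w' p -> is_nc p;
  cat_tensor : forall w1 w1' w2 w2' p q, C w1 w1' p -> C w2 w2' q ->
          C (w1 ++ w2) (w1' ++ w2') (tensor p q);
  cat_comp : forall w w' w'' p q, C w w' p -> C w' w'' q -> C w w'' (part_comp q p);
  cat_adj : forall w w' p, C w w' p -> C w' w (adjoint p);
  cat_rot_ul : forall a w w' p, C (a :: w) w' p -> C w (inv a :: w') (rot_ul (inv a) p);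
  cat_rot_ur : forall a w w' p, C (w ++ [:: a]) w' p -> C w (w' ++ [:: inv a]) (rot_ur (inv a) p);
  cat_rot_ll : forall a w w' p, C w (a :: w') p -> C (inv a :: w) w' (rot_ll (inv a) p);
  cat_rot_lr : forall a w w' p, C w (w' ++ [:: a]) p -> C (w ++ [:: inv a]) w' (rot_lr (inv a) p);
  cat_id : forall a, C [:: a] [:: a] idpart }.

(* q is a full subpartition of p (one line, points 0..size w - 1) on the
   0-indexed interval a .. a+b: a union of blocks of p whose points are
   exactly that interval. *)
Definition full_subpartition_on n (P : pset n) (Q : {set {set 'I_n}}) (a b : nat) : Prop :=
  [/\ Q \subset P, a + b < n & cover Q = [set x : 'I_n | a <= val x <= a + b]].

(* the full subpartition Q, regarded as a partition of the subword w_a..w_(a+b)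
   on points 0..b (point i corresponds to point a+i of p) *)
Definition restrict_part m n (Q : {set {set 'I_n}}) (a : nat) : pset m :=
  mkpart m (fun i j => same Q (a + i) (a + j)).

From mathcomp Require Import all_boot.
From mathcomp Require Import zify.
Set Implicit Arguments. Unset Strict Implicit. Unset Printing Implicit Defensive.

(* Rotating every point of [p] outside the interval [a, a+b] to the lower row
   gives a partition [P2] of [C(v, u)] whose upper row carries [q]; since [q] is
   a union of blocks of [p], no block of [P2] joins its two rows.  For such a
   partition, [P2^* P2] only depends on the upper row, so it equals [q^* q], and
   it lies in [C] by the adjoint and composition axioms.  The rotations are
   tracked by injective relabellings of the points. *)


Lemma sameP n (P : pset n) i j :
  reflect (exists B x y, [/\ B \in P, x \in B, y \in B, val x = i & val y = j])
          (same P i j).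
Proof.
apply: (iffP existsP).
  case=> B /andP[BP /existsP[x /andP[xB /existsP[y /andP[yB /andP[/eqP ex /eqP ey]]]]]].
  by exists B, x, y.
case=> B [x [y [BP xB yB ex ey]]]; exists B; rewrite BP /=; apply/existsP; exists x.
by rewrite xB /=; apply/existsP; exists y; rewrite yB ex ey !eqxx.
Qed.

Lemma same_block n (P : pset n) (x y : 'I_n) B :
  B \in P -> x \in B -> y \in B -> same P x y.
Proof. by move=> BP xB yB; apply/sameP; exists B, x, y. Qed.

Lemma same_lt n (P : pset n) i j : same P i j -> i < n /\ j < n.
Proof. by case/sameP=> B [x [y [_ _ _ <- <-]]]; split; apply: ltn_ord. Qed.

Lemma same_sym n (P : pset n) i j : same P i j -> same P j i.
Proof. by case/sameP=> B [x [y [BP xB yB ex ey]]]; apply/sameP; exists B, y, x. Qed.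

Lemma same_refl n (P : pset n) i : is_part P -> i < n -> same P i i.
Proof.
case/and3P=> /eqP covP _ _ lt_in.
have : Ordinal lt_in \in cover P by rewrite covP inE.
by case/bigcupP=> B BP xB; apply: (same_block BP xB xB).
Qed.

Lemma same_trans n (P : pset n) i j k :
  is_part P -> same P i j -> same P j k -> same P i k.
Proof.
case/and3P=> _ tIP _.
case/sameP=> B [x [y [BP xB yB <- ey]]]; case/sameP=> B' [y' [z [BP' yB' zB' ey' <-]]].
have eyy' : y = y' by apply: val_inj; rewrite ey ey'.
subst y'; have eBB' : B = B' by rewrite -(def_pblock tIP BP yB) (def_pblock tIP BP' yB').
by rewrite -eBB' in zB'; apply: same_block zB'.
Qed.

Definition equiv_below n (r : nat -> nat -> bool) :=
  [/\ forall x, x < n -> r x x,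
      forall x y, x < n -> y < n -> r x y -> r y x &
      forall x y z, x < n -> y < n -> z < n -> r x y -> r y z -> r x z].

Lemma equiv_below_same n (P : pset n) : is_part P -> equiv_below n (same P).
Proof.
move=> hP; split=> [x|x y _ _|x y z _ _ _]; first exact: same_refl.
  exact: same_sym.
exact: same_trans.
Qed.

Lemma mkpart_part n r : equiv_below n r -> is_part (mkpart n r).
Proof.
case=> rr sr tr; apply: equivalence_partitionP => x y z _ _ _.
split; first exact: rr (ltn_ord z).
move=> rxy; apply/idP/idP; last exact: tr (ltn_ord x) (ltn_ord y) (ltn_ord z) rxy.
by apply: tr (ltn_ord y) (ltn_ord x) (ltn_ord z) _; apply: sr.
Qed.

Lemma same_mkpart n r i j : equiv_below n r ->
  same (mkpart n r) i j = [&& i < n, j < n & r i j].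
Proof.
case=> rr sr tr; apply/idP/idP.
  case/sameP=> B [x [y [/imsetP[x0 _ ->] xB yB <- <-]]].
  move: xB yB; rewrite !inE /= !ltn_ord /= => rx ry.
  exact: tr (sr _ _ _ _ rx) ry.
case/and3P=> lt_in lt_jn rij.
apply: (@same_block _ _ (Ordinal lt_in) (Ordinal lt_jn) [set y | r i (val y)]).
- by apply/imsetP; exists (Ordinal lt_in); last by apply/setP=> y; rewrite !inE.
- by rewrite inE /= rr.
- by rewrite inE.
Qed.

Lemma mkpart_ext n (r1 r2 : nat -> nat -> bool) :
  (forall i j : 'I_n, r1 i j = r2 i j) -> mkpart n r1 = mkpart n r2.
Proof.
move=> r12; apply: eq_imset => x.
by apply: eq_finset => y; rewrite r12.
Qed.

Section Pull.
Variables (m n : nat) (f : nat -> nat) (P : pset n).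
Hypotheses (hP : is_part P) (f_lt : forall x, x < m -> f x < n).

Lemma equiv_below_pull : equiv_below m (fun i j => same P (f i) (f j)).
Proof.
have [rr sr tr] := equiv_below_same hP.
split=> [x /f_lt|x y /f_lt ? /f_lt|x y z /f_lt ? /f_lt ? /f_lt].
- exact: rr.
- exact: sr.
- exact: tr.
Qed.

Lemma pull_part : is_part (pull m f P).
Proof. exact: mkpart_part equiv_below_pull. Qed.

Lemma same_pull i j : same (pull m f P) i j = [&& i < m, j < m & same P (f i) (f j)].
Proof. exact: same_mkpart equiv_below_pull. Qed.

End Pull.

(* [F] sends each point of [P'] to the point of [P] it comes from. *)
Definition relabels m n (F : nat -> nat) (P' : pset m) (P : pset n) : Prop :=
  [/\ forall x, x < m -> F x < n,
      forall x y, x < m -> y < m -> F x = F y -> x = y &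
      forall x y, x < m -> y < m -> same P' x y = same P (F x) (F y)].

Lemma relabels_comp k m n G F (P'' : pset k) (P' : pset m) (P : pset n) :
  relabels G P'' P' -> relabels F P' P -> relabels (F \o G) P'' P.
Proof.
case=> G_lt G_inj sameG [F_lt F_inj sameF]; split=> [x /G_lt /F_lt //||x y lt_x lt_y].
  by move=> x y lt_x lt_y /F_inj-/(_ (G_lt _ lt_x) (G_lt _ lt_y)) /G_inj; apply.
by rewrite sameG // sameF //; apply: G_lt.
Qed.

Lemma relabels_pull m n f (P : pset n) : is_part P ->
  (forall x, x < m -> f x < n) ->
  (forall x y, x < m -> y < m -> f x = f y -> x = y) ->
  relabels f (pull m f P) P.
Proof.
move=> hP f_lt f_inj; split=> // x y lt_x lt_y.
by rewrite same_pull // lt_x lt_y.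
Qed.

Lemma relabels_rot_ul A (a b : A) w w' (P : pset (size (a :: w) + size w')) :
  is_part P ->
  relabels (fun x => if x < size w then x.+1 else if x == size w then 0 else x)
           (rot_ul b P) P.
Proof.
by move=> hP; apply: relabels_pull => // [x|x y] /=; repeat case: ifP; lia.
Qed.

Lemma relabels_rot_ur A (a b : A) w w' (P : pset (size (w ++ [:: a]) + size w')) :
  is_part P ->
  relabels (fun x => if x < size w then x
                     else if x < size w + size w' then x.+1 else size w)
           (rot_ur b P) P.
Proof.
by move=> hP; apply: relabels_pull => // [x|x y]; rewrite !size_cat /=;
  repeat case: ifP; lia.
Qed.

Section RotateDown.
Variables (A : Type) (inv : A -> A).
Unset Implicit Arguments.
Variable C : pcat_family A.
Set Implicit Arguments.
Hypothesis HC : category_of_nc_partitions inv C.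

Lemma cat_part w w' (P : pset (size w + size w')) : C w w' P -> is_part P.
Proof. by case/(cat_nc HC)/andP. Qed.

Lemma rotate_prefix_down v : forall u w u' (P : pset (size w + size u')),
  w = v ++ u -> C w u' P ->
  exists u2 (P2 : pset (size u + size u2)) F,
    [/\ C u u2 P2, relabels F P2 P & forall x, x < size u -> F x = size v + x].
Proof.
elim: v => [|c v IHv] u w u' P eq_w CP; subst w; first by exists u', P, id.
have [u2 [P2 [F [CP2 relF Fshift]]]] := IHv _ _ _ _ erefl (cat_rot_ul HC CP).
exists u2, P2; eexists; split; first exact: CP2.
  exact: relabels_comp relF (relabels_rot_ul _ (cat_part CP)).
by move=> x lt_xu /=; rewrite Fshift // size_cat; case: ifP; lia.
Qed.

Lemma rotate_suffix_down v : forall u w u' (P : pset (size w + size u')),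
  w = u ++ v -> C w u' P ->
  exists u2 (P2 : pset (size u + size u2)) F,
    [/\ C u u2 P2, relabels F P2 P & forall x, x < size u -> F x = x].
Proof.
elim/last_ind: v => [|v c IHv] u w u' P.
  by rewrite cats0 => eq_w CP; subst w; exists u', P, id.
rewrite -cats1 catA => eq_w CP; subst w.
have [u2 [P2 [F [CP2 relF Fid]]]] := IHv _ _ _ _ erefl (cat_rot_ur HC CP).
exists u2, P2; eexists; split; first exact: CP2.
  exact: relabels_comp relF (relabels_rot_ur _ (cat_part CP)).
by move=> x lt_xu /=; rewrite Fid // size_cat; case: ifP; lia.
Qed.

End RotateDown.

Section FullSubpartition.
Variables (n : nat) (P : pset n) (Q : {set {set 'I_n}}) (a b : nat).
Hypotheses (hP : is_part P) (hQ : full_subpartition_on P Q a b).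

Lemma same_full_subpartition x y : a <= x <= a + b -> same Q x y = same P x y.
Proof.
case: hQ => QP _ covQ; case/and3P: hP => _ tIP _ lt_x.
apply/idP/idP; case/sameP=> B [x' [y' [BQP xB yB ex ey]]]; apply/sameP.
  by exists B, x', y'; split=> //; apply: (subsetP QP).
have : x' \in cover Q by rewrite covQ inE ex.
case/bigcupP=> B' B'Q xB'; exists B', x', y'; split=> //.
by rewrite -(def_pblock tIP (subsetP QP _ B'Q) xB') (def_pblock tIP BQP xB).
Qed.

Lemma full_subpartition_closed x y :
  a <= x <= a + b -> same P x y -> a <= y <= a + b.
Proof.
case: hQ => _ _ covQ lt_x; rewrite -same_full_subpartition //.
case/sameP=> B [x' [y' [BQ _ yB _ <-]]].
have : y' \in cover Q by apply/bigcupP; exists B.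
by rewrite covQ inE.
Qed.

Lemma restrict_part_pull m : m <= b.+1 -> restrict_part m Q a = pull m (addn a) P.
Proof.
move=> le_mb; apply: mkpart_ext => i j.
by rewrite same_full_subpartition //; have := ltn_ord i; lia.
Qed.

End FullSubpartition.

Lemma same_adjoint A (w w' : seq A) (P : pset (size w + size w')) x y :
  is_part P ->
  same (adjoint P) x y =
    [&& x < size w' + size w, y < size w' + size w &
        same P (if x < size w' then size w + x else x - size w')
               (if y < size w' then size w + y else y - size w')].
Proof. by move=> hP; rewrite same_pull // => z; case: ifP; lia. Qed.

Lemma comp_edge_sym A (w w' w'' : seq A) p q i j :
  comp_edge (w := w) (w' := w') (w'' := w'') p q i j -> comp_edge p q j i.
Proof.
rewrite /comp_edge => /or4P[/and3P[-> -> /same_sym ->]|/and3P[-> -> /same_sym ->]|->|->] //.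
all: by rewrite !orbT.
Qed.

Lemma exists_connect N (e : rel 'I_N) i j (lt_i : i < N) (lt_j : j < N) :
  [exists x : 'I_N, exists y : 'I_N, [&& val x == i, val y == j & connect e x y]]
  = connect e (Ordinal lt_i) (Ordinal lt_j).
Proof.
apply/existsP/idP=> [[x /existsP[y /and3P[/eqP ex /eqP ey cxy]]]|cij].
  have -> : Ordinal lt_i = x by apply: val_inj.
  by have -> : Ordinal lt_j = y by apply: val_inj.
by exists (Ordinal lt_i); apply/existsP; exists (Ordinal lt_j); rewrite !eqxx.
Qed.

Lemma closed_comp_edge A (w w' w'' : seq A) p q N (K : {pred 'I_N}) :
  (forall x y : 'I_N, comp_edge (w := w) (w' := w') (w'' := w'') p q x y ->
     x \in K -> y \in K) ->
  closed (fun x y : 'I_N => comp_edge p q x y) K.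
Proof.
move=> eK x y exy; apply/idP/idP; first exact: eK.
by apply: eK; apply: comp_edge_sym.
Qed.

Definition upper_closed k l (P : pset (k + l)) : Prop :=
  forall x y, x < k -> same P x y -> y < k.

Section AdjointComposition.
Variables (A : Type) (v u : seq A) (P : pset (size v + size u)).
Hypotheses (hP : is_part P) (closedP : upper_closed P).

Local Notation s := (size v).
Local Notation m := (size u).
Local Notation N := (s + m + (m + s)).
Local Notation e := (fun x y : 'I_N => comp_edge P (adjoint P) x y).

Lemma connect_top (x y : 'I_N) : x < s -> connect e x y = (y < s) && same P x y.
Proof.
move=> lt_xs; apply/idP/andP=> [cxy|[lt_ys Pxy]]; last first.
  by apply: connect1; rewrite /comp_edge Pxy; apply/orP; left; lia.
pose K := [pred z : 'I_N | (z < s) && same P x z].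
have cK : closed e K.
  apply: closed_comp_edge => z t + /andP[lt_zs Pxz]; rewrite /comp_edge inE.
  case/or4P=> [/and3P[_ _ Pzt]|/and3P[? ? _]|/and3P[? ? _]|/and3P[_ _ /eqP]]; try lia.
  by rewrite (closedP lt_zs Pzt) (same_trans hP Pxz Pzt).
have Kx : x \in K by rewrite inE lt_xs same_refl //; lia.
by move: Kx; rewrite (closed_connect cK cxy) inE => /andP.
Qed.

Lemma connect_bottom (x y : 'I_N) : s + m + m <= x ->
  connect e x y = (s + m + m <= y) && same P (x - (s + m + m)) (y - (s + m + m)).
Proof.
have edgeE (z t : 'I_N) : s + m + m <= z ->
    e z t = (s + m + m <= t) && same P (z - (s + m + m)) (t - (s + m + m)).
  move=> le_z; have lt_z := ltn_ord z; have lt_t := ltn_ord t.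
  have -> : z - (s + m + m) = z - (s + m) - m by lia.
  have -> : t - (s + m + m) = t - (s + m) - m by lia.
  rewrite /comp_edge same_adjoint //; apply/idP/andP.
    case/or4P=> [/and3P[? _ _]|/and3P[_ ? /and3P[_ _]]|/and3P[_ ? _]|/and3P[? ? /eqP]];
      try lia.
    rewrite ifF; last lia.
    case: ifP => [lt_tm /(closedP _)|le_mt Pzt]; first lia.
    by split=> //; lia.
  case=> le_t Pzt; apply/orP; right; apply/orP; left.
  by rewrite !ifF ?Pzt ?andbT; lia.
move=> le_x; apply/idP/andP=> [cxy|[le_y Pxy]]; last first.
  by apply: connect1; rewrite edgeE // le_y.
pose K := [pred z : 'I_N | (s + m + m <= z) && same P (x - (s + m + m)) (z - (s + m + m))].
have cK : closed e K.
  apply: closed_comp_edge => z t + /andP[le_z Pxz]; rewrite edgeE // inE.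
  by case/andP=> -> Pzt; apply: same_trans hP Pxz Pzt.
have Kx : x \in K by rewrite inE le_x same_refl //; have := ltn_ord x; lia.
by move: Kx; rewrite (closed_connect cK cxy) inE => /andP.
Qed.

Lemma comp_adjoint_upper_closed :
  part_comp (adjoint P) P =
  mkpart (s + s) (fun i j => if i < s then (j < s) && same P i j
                             else (s <= j) && same P (i - s) (j - s)).
Proof.
apply: mkpart_ext => i j.
have g_lt (k : 'I_(s + s)) : (if k < s then nat_of_ord k else s + m + m + (k - s)) < N.
  by have := ltn_ord k; case: ifP; lia.
rewrite (exists_connect _ (g_lt i) (g_lt j)).
have /orP[lt_is|le_si] := orbN (i < s).
  rewrite connect_top /= ?lt_is //.
  case: ifP => [-> //|_].
  by have -> : s + m + m + (j - s) < s = false by lia.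
rewrite connect_bottom /= (negbTE le_si) ?leq_addr // addKn.
case: ifP => [lt_js|/negbT le_sj]; last by rewrite addKn leq_addr leqNgt le_sj.
by rewrite (_ : s + m + m <= j = false) 1?(_ : s <= j = false) //; lia.
Qed.

End AdjointComposition.

Lemma comp_adjoint_congr A (v u u' : seq A)
    (P : pset (size v + size u)) (P' : pset (size v + size u')) :
  is_part P -> is_part P' -> upper_closed P -> upper_closed P' ->
  (forall x y, x < size v -> y < size v -> same P x y = same P' x y) ->
  part_comp (adjoint P) P = part_comp (adjoint P') P'.
Proof.
move=> hP hP' closedP closedP' PP'.
rewrite !comp_adjoint_upper_closed //; apply: mkpart_ext => i j.
have lt_i := ltn_ord i; have lt_j := ltn_ord j.
case: ifP => lt_is; first by case lt_js: (j < size v) => //=; rewrite PP'.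
by case le_js: (size v <= j) => //=; rewrite PP' //; lia.
Qed.

Lemma relabels_upper_closed k l n F (P' : pset (k + l)) (P : pset n) a :
  relabels F P' P -> (forall x, x < k -> F x = a + x) ->
  (forall x y, a <= x < a + k -> same P x y -> a <= y < a + k) ->
  upper_closed P'.
Proof.
case=> _ F_inj sameF Fshift closedP x y lt_xk P'xy.
have [lt_x lt_y] := same_lt P'xy.
rewrite sameF // Fshift // in P'xy.
have /andP[le_aFy lt_Fy] := closedP (a + x) (F y) (ltac:(lia)) P'xy.
have FyE : F y = F (F y - a) by rewrite [RHS]Fshift; lia.
by rewrite (F_inj _ _ lt_y _ FyE); lia.
Qed.

Theorem proposition3p2 (A : Type) (inv : A -> A) (C : pcat_family A)
    (Hinv : involutive inv) (HC : category_of_nc_partitions inv C)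
    (w : seq A) (p : pset (size w + size (@nil A)))
    (Hp : C w [::] p)
    (Q : {set {set 'I_(size w + size (@nil A))}}) (a b : nat)
    (HQ : full_subpartition_on p Q a b) :
  let v := take b.+1 (drop a w) in
  let q : pset (size v + size (@nil A)) := restrict_part _ Q a in
  C v v (part_comp (adjoint q) q).
Proof.
move=> v q; have hp := cat_part HC Hp.
have lt_abw : a + b < size w by case: HQ => _ + _; rewrite addn0.
have size_v : size v = b.+1 by rewrite size_takel // size_drop; lia.
have qE : q = pull _ (addn a) p by rewrite /q (restrict_part_pull hp HQ) // size_v addn0.
have wE : w = (take a w ++ v) ++ drop b.+1 (drop a w) by rewrite -catA !cat_take_drop.
have [u1 [P1 [F1 [CP1 relF1 F1id]]]] := rotate_suffix_down HC wE Hp.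
have [u2 [P2 [F2 [CP2 relF2 F2shift]]]] := rotate_prefix_down HC erefl CP1.
have relF := relabels_comp relF2 relF1.
have Fshift x : x < size v -> F1 (F2 x) = a + x.
  have size_take : size (take a w) = a by rewrite size_takel //; lia.
  by move=> lt_xv; rewrite F2shift // F1id size_take // size_cat size_take; lia.
suff -> : part_comp (adjoint q) q = part_comp (adjoint P2) P2.
  exact (cat_comp HC CP2 (cat_adj HC CP2)).
apply: comp_adjoint_congr => [||x y _ /same_lt[_]||x y lt_xv lt_yv].
- by rewrite qE; apply: pull_part => // x; lia.
- exact (cat_part HC CP2).
- by rewrite addn0.
- apply: (relabels_upper_closed relF Fshift) => x y lt_x Pxy.
  by have := full_subpartition_closed hp HQ (ltac:(lia) : a <= x <= a + b) Pxy; lia.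
- rewrite qE same_pull // => [|z]; last lia.
  by case: relF => _ _ -> /=; rewrite ?Fshift ?addn0 ?lt_xv ?lt_yv //; lia.
Qed.
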